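(* Let $\beta,\gamma\in\mathbb{C}$ with $\gamma\neq1$ and $\beta\neq\gamma$, let $c\in\mathbb{C}\setminus\{0\}$, and for index $n$ consider the discrete system for $(x_n,y_n)$ \[ (x_{n+1}+y_n)(x_n+y_n)=\frac{\gamma-1}{c^2}\,y_n(y_n-c)\Big(y_n-c\frac{\gamma-\beta}{\gamma-1}\Big),\quad (x_n+y_{n-1})(x_n+y_n)=\frac{x_n(x_n+c)}{x_n-\frac{cn}{\gamma-1}}\Big(x_n+c\frac{\gamma-\beta}{\gamma-1}\Big), \] together with the differential system in $c$ \[ \begin{aligned} \frac{dx}{dc}&=\frac{(n+1)x+ny}{c}-\frac{\gamma-1}{c^2}x(x+y)+\frac{x(x+c)\big(c(\gamma-\beta)+(\gamma-1)x\big)}{c^2(x+y)},\\ \frac{dy}{dc}&=-x+\frac{y}{c}+y\Big(-1+\frac{(\beta-1)(y-c)}{c(x+y)}+\frac{(\gamma-1)(y-c)^2}{c^2(x+y)}\Big). \end{aligned} \] Define the birational change of variables and parameter identification \[ q=\frac{(\gamma-1)y(y-c)}{c^2(x+y)},\qquad p=\frac{c(x+c)}{y-c}+\frac{c^2(\gamma+n+1-\beta)(x+y)}{c^2x+y\big(c(\gamma+c-1)-(\gamma-1)y\big)},\qquad t=c, \] \[ a_0=n+1,\quad a_1=\gamma-1,\quad a_2=2-\beta,\quad a_3=-\gamma-n. \] Then this change of variables simultaneously transforms the discrete system into the discrete Painlev\'e equation \[ q_{n+1}=\frac{p_n+t}{t}\Big(1-\frac{a_0+a_1}{a_0+(p_n+t)q_n}\Big),\qquad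 p_{n+1}=\frac{1}{1-q_{n+1}}\Big(a_2+\frac{(a_0+a_1)p_n}{t+p_n-t\,q_{n+1}}\Big), \] with parameter evolution $n\mapsto n+1$ given by $(a_0,a_1,a_2,a_3)\mapsto(a_0+1,a_1,a_2,a_3-1)$ (the $a_i$ in the equations being those at index $n$), and transforms the differential system into the Hamiltonian system \[ \frac{dq}{dt}=\frac{1}{t}\Big(q(q-1)(2p+t)-a_1(q-1)-a_3q\Big),\qquad \frac{dp}{dt}=\frac{1}{t}\Big(p(p+t)(1-2q)+(a_1+a_3)p-a_2t\Big). \]
   Context: The discrete system arises from the recurrence coefficients of polynomials orthogonal with respect to the generalised Meixner weight $\frac{(\gamma)_kc^k}{(\beta)_kk!}$ on $\mathbb{Z}_{\ge0}$. The Hamiltonian system is a Hamiltonian form of the fifth Painlev\'e equation, with $a_0+a_1+a_2+a_3=1$. *)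

From HB Require Import structures.
From mathcomp Require Import all_boot all_order all_algebra.
From mathcomp Require Import complex.
From mathcomp Require Import reals topology normedtype derive.

Set Implicit Arguments.
Unset Strict Implicit.
Unset Printing Implicit Defensive.

Import Order.TTheory GRing.Theory Num.Theory.
Local Open Scope ring_scope.

Section GenPV.
Variable C : fieldType.

(* Parameter identification (index n).  NB: a3 is fixed by the
   normalisation a0+a1+a2+a3 = 1 of the context. *)
Definition a0 (n : nat) : C := n%:R + 1.
Definition a1 (gamma : C) : C := gamma - 1.
Definition a2 (beta : C) : C := 2 - beta.
Definition a3 (beta gamma : C) (n : nat) : C := beta - gamma - n%:R - 1.

Definition qPV (gamma c x y : C) : C :=
  (gamma - 1) * y * (y - c) / (c ^+ 2 * (x + y)).

Definition pden (gamma c x y : C) : C :=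
  c ^+ 2 * x + y * (c * (gamma + c - 1) - (gamma - 1) * y).

Definition pPV (beta gamma : C) (n : nat) (c x y : C) : C :=
  c * (x + c) / (y - c)
  + c ^+ 2 * (gamma + n%:R + 1 - beta) * (x + y) / pden gamma c x y.

Definition disc_eq1 (beta gamma c : C) (xn1 xn yn : C) : Prop :=
  (xn1 + yn) * (xn + yn)
  = (gamma - 1) / c ^+ 2 * yn * (yn - c)
      * (yn - c * (gamma - beta) / (gamma - 1)).

Definition disc_eq2 (beta gamma c : C) (n : nat) (xn ynm1 yn : C) : Prop :=
  (xn + ynm1) * (xn + yn)
  = xn * (xn + c) / (xn - c * n%:R / (gamma - 1))
      * (xn + c * (gamma - beta) / (gamma - 1)).

Definition dP_q (A0 A1 t q p : C) : C :=
  (p + t) / t * (1 - (A0 + A1) / (A0 + (p + t) * q)).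

Definition dP_p (A0 A1 A2 t qnext p : C) : C :=
  1 / (1 - qnext) * (A2 + (A0 + A1) * p / (t + p - t * qnext)).

Definition ode_x (beta gamma : C) (n : nat) (c x y : C) : C :=
  ((n%:R + 1) * x + n%:R * y) / c - (gamma - 1) / c ^+ 2 * x * (x + y)
  + x * (x + c) * (c * (gamma - beta) + (gamma - 1) * x) / (c ^+ 2 * (x + y)).

Definition ode_y (beta gamma : C) (c x y : C) : C :=
  - x + y / c
  + y * (-1 + (beta - 1) * (y - c) / (c * (x + y))
         + (gamma - 1) * (y - c) ^+ 2 / (c ^+ 2 * (x + y))).

Definition ham_q (A1 A3 t q p : C) : C :=
  (q * (q - 1) * (2 * p + t) - A1 * (q - 1) - A3 * q) / t.

Definition ham_p (A1 A2 A3 t q p : C) : C :=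
  (p * (p + t) * (1 - 2 * q) + (A1 + A3) * p - A2 * t) / t.

End GenPV.
Arguments a0 {C} n.

(* The complex numbers C = R[i] over the real numbers R : realType, packaged
   as a numClosedFieldType so that mathcomp-analysis' normed structure (and
   hence complex differentiation) applies. *)
Definition CC (R : realType) : numClosedFieldType := (R : rcfType)[i].

From HB Require Import structures.
From mathcomp Require Import all_boot all_order all_algebra.
From mathcomp Require Import complex.
From mathcomp Require Import reals topology normedtype derive.
From mathcomp Require Import ring.
Import Order.TTheory GRing.Theory Num.Theory.
Import numFieldNormedType.Exports.
Local Open Scope ring_scope.

Set Implicit Arguments.
Unset Strict Implicit.

(* Solving the first discrete equation for x_n expresses q_n = (x_{n+1} + y_n) / (y_n - B)
   and p_n rationally in x_{n+1} and y_n, where B = c (gamma - beta) / (gamma - 1); the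
   second equation does the same for y_{n+1}.  Both steps of the discrete Painleve
   equation then follow from two relations that are linear in x_{n+1} + c and y_{n+1} - c,
     (a0 + (p_n + c) q_n) (y_{n+1} - c) + (p_n + c) (x_{n+1} + c) = 0,
     (x_{n+1} + c) (p_n + c - c q_{n+1}) + (a0 + a1) (y_{n+1} - c) = 0,
   which become rational identities once the parameters are tied together by
   (gamma - 1) (B + K) = c (gamma + n + 1 - beta), with K = c (n + 1) / (gamma - 1).
   The continuous part is a direct computation: differentiate q and p along the flow by
   the quotient rule and compare rational functions. *)

Lemma solve_linear (C : fieldType) (a x b : C) :
  a != 0 -> a * x + b = 0 -> x = - b / a.
Proof.
move=> a0 /eqP; rewrite addr_eq0 => /eqP <-.
by rewrite mulrC mulKf.
Qed.

Lemma dP_q_of_relations (C : fieldType) (A0 A1 t q p q1 u v : C) :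
  t != 0 -> u != 0 -> A0 + (p + t) * q != 0 ->
  u * (p + t - t * q1) + (A0 + A1) * v = 0 ->
  (A0 + (p + t) * q) * v + (p + t) * u = 0 ->
  q1 = dP_q A0 A1 t q p.
Proof.
move=> t0 u0 D0 rel_q1 /(solve_linear D0) ev.
have : t * u * q1 + - (u * (p + t) + (A0 + A1) * v) = 0.
  by rewrite -oppr0 -rel_q1; ring.
move=> /(solve_linear (mulf_neq0 t0 u0)) ->.
by rewrite ev /dP_q; field; rewrite t0 u0 D0.
Qed.

Lemma dP_p_of_relation (C : fieldType) (A0 A1 A2 t p q1 u v : C) :
  v != 0 -> 1 - q1 != 0 -> t + p - t * q1 != 0 ->
  u * (p + t - t * q1) + (A0 + A1) * v = 0 ->
  t * u / v + (A0 + A1 + A2) / (1 - q1) = dP_p A0 A1 A2 t q1 p.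
Proof.
move=> v0 q0 d0 rel; rewrite /dP_p.
have -> : A0 + A1 = - (u * (p + t - t * q1)) / v.
  by apply: solve_linear v0 _; rewrite mulrC addrC.
by field; rewrite v0 q0 d0.
Qed.

Lemma pPV_qPV (C : fieldType) (b g : C) (n : nat) (c x y : C) :
  c != 0 -> x + y != 0 ->
  pPV b g n c x y = c * (x + c) / (y - c) + (g + n%:R + 1 - b) / (1 - qPV g c x y).
Proof.
move=> c0 xy0; rewrite /pPV.
have -> : pden g c x y = c ^+ 2 * (x + y) * (1 - qPV g c x y).
  by rewrite /pden /qPV; field; rewrite c0 xy0.
have [->|q0] := eqVneq (1 - qPV g c x y) 0; first by rewrite !(mulr0, invr0).
by congr (_ + _); field; rewrite q0 xy0 c0.
Qed.

Lemma pV_params_succ (C : fieldType) (b g : C) (n : nat) :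
  (a0 (C:=C) n.+1, a1 g, a2 b, a3 b g n.+1) = (a0 n + 1, a1 g, a2 b, a3 b g n - 1).
Proof. by congr (_, _, _, _); rewrite /a0 /a3; ring. Qed.

Section DiscreteStep.
Variables (C : fieldType) (b g c : C) (n : nat) (x y x1 y1 : C).
Hypotheses (c0 : c != 0) (g1 : g != 1).
Hypotheses (eq1 : disc_eq1 b g c x1 x y) (eq2 : disc_eq2 b g c n.+1 x1 y y1).
Hypotheses (xy0 : x + y != 0) (x1y0 : x1 + y != 0) (x1y10 : x1 + y1 != 0).

Let B := c * (g - b) / (g - 1).
Let K := c * n.+1%:R / (g - 1).
Let g10 : g - 1 != 0. Proof. by rewrite subr_eq0. Qed.

Lemma disc_eq1_factors_neq0 : [/\ y != 0, y - c != 0 & y - B != 0].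
Proof.
have : (g - 1) / c ^+ 2 * y * (y - c) * (y - B) != 0 by rewrite -eq1 mulf_neq0.
by rewrite !mulf_eq0 !negb_or => /andP[/andP[/andP[_ ->] ->] ->].
Qed.

Lemma disc_eq2_factors_neq0 : [/\ x1 != 0, x1 + c != 0, x1 - K != 0 & x1 + B != 0].
Proof.
have : x1 * (x1 + c) / (x1 - K) * (x1 + B) != 0 by rewrite -eq2 mulf_neq0.
by rewrite !mulf_eq0 invr_eq0 !negb_or => /andP[/andP[/andP[-> ->] ->] ->].
Qed.

Lemma shifts_sum : (g - 1) * (B + K) / c = g + n%:R + 1 - b.
Proof. by rewrite /B /K; field; rewrite c0 g10. Qed.

Lemma disc_y1 : y1 = x1 * (x1 + c) / (x1 - K) * (x1 + B) / (x1 + y) - x1.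
Proof. by rewrite -eq2 -/B -/K; field; rewrite x1y0. Qed.

Lemma qPV_disc : qPV g c x y = (x1 + y) / (y - B).
Proof.
have [_ _ yB0] := disc_eq1_factors_neq0.
rewrite /qPV; apply/eqP; rewrite eqr_div ?mulf_neq0 ?expf_neq0 //; apply/eqP.
rewrite (_ : (x1 + y) * (c ^+ 2 * (x + y)) = c ^+ 2 * ((x1 + y) * (x + y))); last by ring.
by rewrite eq1 -/B; field.
Qed.

Lemma pPV_disc : pPV b g n c x y + c
  = (y - B) * ((g - 1) * y / (c * (x1 + y)) - (g + n%:R + 1 - b) / (x1 + B)).
Proof.
have [_ yc0 yB0] := disc_eq1_factors_neq0.
have [_ _ _ x1B0] := disc_eq2_factors_neq0.
rewrite pPV_qPV // qPV_disc.
have -> : x = (g - 1) / c ^+ 2 * y * (y - c) * (y - B) / (x1 + y) - y.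
  by rewrite -eq1 -/B; field.
field.
have -> : y - B - (x1 + y) = - (x1 + B) by ring.
by rewrite oppr_eq0 x1B0 x1y0 c0 yB0 yc0.
Qed.

Lemma a0_add_disc : a0 n + (pPV b g n c x y + c) * qPV g c x y
  = (g - 1) * (y - B) * (x1 - K) / (c * (x1 + B)).
Proof.
have [_ _ yB0] := disc_eq1_factors_neq0.
have [_ _ _ x1B0] := disc_eq2_factors_neq0.
have -> : a0 n = (g - 1) * K / c by rewrite /a0 /K; field; rewrite c0 g10.
by rewrite pPV_disc qPV_disc -shifts_sum; field; rewrite x1B0 c0 yB0 x1y0.
Qed.

Lemma next_y_relation :
  (a0 n + (pPV b g n c x y + c) * qPV g c x y) * (y1 - c)
  + (pPV b g n c x y + c) * (x1 + c) = 0.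
Proof.
have [_ _ x1K0 x1B0] := disc_eq2_factors_neq0.
rewrite a0_add_disc pPV_disc disc_y1 -shifts_sum.
by field; rewrite x1B0 c0 x1y0 x1K0.
Qed.

Lemma next_q_relation :
  (x1 + c) * (pPV b g n c x y + c - c * qPV g c x1 y1) + (a0 n + a1 g) * (y1 - c) = 0.
Proof.
have [x10 x1c0 x1K0 x1B0] := disc_eq2_factors_neq0.
have -> : a0 n + a1 g = (g - 1) * (K + c) / c.
  by rewrite /a0 /a1 /K; field; rewrite c0 g10.
rewrite /qPV; have -> : x1 + y1 = x1 * (x1 + c) / (x1 - K) * (x1 + B) / (x1 + y).
  by rewrite disc_y1 addrC subrK.
rewrite pPV_disc disc_y1 -shifts_sum.
by field; rewrite x1y0 x1K0 c0 x1B0 x1c0 x10.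
Qed.

Lemma disc_step_dP : y1 != c -> 1 - qPV g c x1 y1 != 0 ->
  c + pPV b g n c x y - c * qPV g c x1 y1 != 0 ->
  qPV g c x1 y1 = dP_q (a0 n) (a1 g) c (qPV g c x y) (pPV b g n c x y) /\
  pPV b g n.+1 c x1 y1
    = dP_p (a0 n) (a1 g) (a2 b) c (qPV g c x1 y1) (pPV b g n c x y).
Proof.
move=> y1c q10 d0.
have [_ _ yB0] := disc_eq1_factors_neq0.
have [_ x1c0 x1K0 x1B0] := disc_eq2_factors_neq0.
split.
  apply: dP_q_of_relations c0 x1c0 _ next_q_relation next_y_relation.
  by rewrite a0_add_disc !mulf_neq0 ?invr_eq0 ?mulf_neq0.
rewrite pPV_qPV // (_ : g + n.+1%:R + 1 - b = a0 n + a1 g + a2 b); last first.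
  by rewrite /a0 /a1 /a2; ring.
by apply: dP_p_of_relation q10 d0 next_q_relation; rewrite subr_eq0.
Qed.

End DiscreteStep.

Section DerivativeRules.
Variables (K : numFieldType) (a : K).
Implicit Types (f h : K -> K) (k df dh : K).

(* Derivative values are typed at [K] itself rather than at its normed-module structure
   (as in [is_derive_cst] and [is_derive_eq]), so that [field] can normalize them. *)

Lemma is_derive_const k : is_derive a 1 (fun=> k) (0 : K).
Proof. exact: is_derive_cst. Qed.

Lemma is_derive_var : is_derive a 1 (fun t => t) 1.
Proof. exact: is_derive_id. Qed.

Lemma is_derive_add f h df dh : is_derive a 1 f df -> is_derive a 1 h dh ->
  is_derive a 1 (fun t => f t + h t) (df + dh).
Proof. exact: is_deriveD. Qed.

Lemma is_derive_sub f h df dh : is_derive a 1 f df -> is_derive a 1 h dh ->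
  is_derive a 1 (fun t => f t - h t) (df - dh).
Proof. exact: is_deriveB. Qed.

Lemma is_derive_opp f df : is_derive a 1 f df -> is_derive a 1 (fun t => - f t) (- df).
Proof. exact: is_deriveN. Qed.

Lemma is_derive_mul f h df dh : is_derive a 1 f df -> is_derive a 1 h dh ->
  is_derive a 1 (fun t => f t * h t) (f a * dh + h a * df).
Proof. exact: is_deriveM. Qed.

Lemma is_derive_exp f df m : is_derive a 1 f df ->
  is_derive a 1 (fun t => f t ^+ m) (m%:R * f a ^+ m.-1 * df).
Proof. by rewrite -functions.exprfctE; exact: is_deriveX. Qed.

Lemma is_derive_inv f df : f a != 0 -> is_derive a 1 f df ->
  is_derive a 1 (fun t => (f t)^-1) (- (f a) ^- 2 * df).
Proof.
move=> fa0 dff; apply: DeriveDef; first exact: derivableV.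
by rewrite deriveV // derive_val.
Qed.

Lemma is_derive_val f df df' : is_derive a 1 f df -> df = df' -> is_derive a 1 f df'.
Proof. by move=> ? <-. Qed.

Lemma is_derive1P f df : is_derive a 1 f df <-> derivable f a 1 /\ derive1 f a = df.
Proof.
split=> [Df | [/derivableP + <-]]; last by rewrite derive1E.
by rewrite derive1E derive_val; split=> //; exact: ex_derive.
Qed.

End DerivativeRules.

(* [eapply] rather than [apply:], which would let typeclass resolution fill the premises
   with the library's [is_derive] instances, whose values are stated with [*:]. *)
Ltac derive_rules := repeat first
  [ eapply is_derive_const | eapply is_derive_var | eassumption
  | eapply is_derive_exp | eapply is_derive_inv | eapply is_derive_mul
  | eapply is_derive_add | eapply is_derive_sub | eapply is_derive_opp ].

Section HamiltonianFlow.
Variables (K : numFieldType) (b g : K) (n : nat) (x y : K -> K) (c : K).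
Hypothesis c0 : c != 0.
Hypothesis dx : is_derive c 1 x (ode_x b g n c (x c) (y c)).
Hypothesis dy : is_derive c 1 y (ode_y b g c (x c) (y c)).
Hypotheses (xy0 : x c + y c != 0) (yc0 : y c - c != 0) (pden0 : pden g c (x c) (y c) != 0).

Lemma is_derive_qPV : is_derive c 1 (fun t => qPV g t (x t) (y t))
  (ham_q (a1 g) (a3 b g n) c (qPV g c (x c) (y c)) (pPV b g n c (x c) (y c))).
Proof.
apply: is_derive_val.
  by rewrite /qPV; derive_rules; rewrite mulf_neq0 ?expf_neq0.
rewrite /= /ham_q /a1 /a3 /qPV /pPV /ode_x /ode_y /pden.
by field; rewrite c0 xy0 yc0 pden0.
Qed.

Lemma is_derive_pPV : is_derive c 1 (fun t => pPV b g n t (x t) (y t))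
  (ham_p (a1 g) (a2 b) (a3 b g n) c (qPV g c (x c) (y c)) (pPV b g n c (x c) (y c))).
Proof.
apply: is_derive_val.
  by rewrite /pPV /pden; derive_rules.
rewrite /= /ham_p /a1 /a2 /a3 /qPV /pPV /ode_x /ode_y /pden.
by field; rewrite c0 xy0 yc0 pden0.
Qed.

End HamiltonianFlow.

Theorem proposition4p18 (R : realType) (beta gamma : CC R)
  (hg1 : gamma != 1) (hbg : beta != gamma) :
  (* discrete part *)
  (forall (c : CC R) (x y : nat -> CC R),
     c != 0 ->
     (forall n, disc_eq1 beta gamma c (x n.+1) (x n) (y n)) ->
     (forall n, disc_eq2 beta gamma c n.+1 (x n.+1) (y n) (y n.+1)) ->
     (* genericity: all denominators (and x_{n+1}+y_n) are nonzero *)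
     (forall n, x n + y n != 0) ->
     (forall n, x n.+1 + y n != 0) ->
     (forall n, y n != c) ->
     (forall n, pden gamma c (x n) (y n) != 0) ->
     (forall n, x n - c * n%:R / (gamma - 1) != 0) ->
     let q n := qPV gamma c (x n) (y n) in
     let p n := pPV beta gamma n c (x n) (y n) in
     (forall n, a0 n + (p n + c) * q n != 0) ->
     (forall n, 1 - q n.+1 != 0) ->
     (forall n, c + p n - c * q n.+1 != 0) ->
     forall n,
       q n.+1 = dP_q (a0 n) (a1 gamma) c (q n) (p n) /\
       p n.+1 = dP_p (a0 n) (a1 gamma) (a2 beta) c (q n.+1) (p n) /\
       (* parameter evolution n -> n+1 *)
       (a0 (C:=CC R) n.+1, a1 gamma, a2 beta, a3 beta gamma n.+1)
         = (a0 n + 1, a1 gamma, a2 beta, a3 beta gamma n - 1)) /\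
  (* continuous part *)
  (forall (n : nat) (x y : CC R -> CC R) (c : CC R),
     c != 0 ->
     derivable x c 1 -> derivable y c 1 ->
     derive1 x c = ode_x beta gamma n c (x c) (y c) ->
     derive1 y c = ode_y beta gamma c (x c) (y c) ->
     x c + y c != 0 -> y c != c -> pden gamma c (x c) (y c) != 0 ->
     let q t := qPV gamma t (x t) (y t) in
     let p t := pPV beta gamma n t (x t) (y t) in
     derivable q c 1 /\ derivable p c 1 /\
     derive1 q c = ham_q (a1 gamma) (a3 beta gamma n) c (q c) (p c) /\
     derive1 p c = ham_p (a1 gamma) (a2 beta) (a3 beta gamma n) c (q c) (p c)).
Proof.
split.
  (* The genericity hypotheses not named here are forced by the discrete equations
     (disc_eq1_factors_neq0, disc_eq2_factors_neq0, a0_add_disc). *)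
  move=> c x y c0 eq1 eq2 xy0 x1y0 yc _ _ q p _ q10 d0 n.
  have [eq_q eq_p] := disc_step_dP c0 hg1 (eq1 n) (eq2 n) (xy0 n) (x1y0 n) (xy0 n.+1)
    (yc n.+1) (q10 n) (d0 n).
  by split; [|split]; [exact: eq_q | exact: eq_p | exact: pV_params_succ].
move=> n x y c c0 dx dy ex ey xy0 yc pden0 q p.
have /is_derive1P Dx := conj dx ex.
have /is_derive1P Dy := conj dy ey.
have yc0 : y c - c != 0 by rewrite subr_eq0.
have /is_derive1P[dq vq] := is_derive_qPV c0 Dx Dy xy0 yc0 pden0.
have /is_derive1P[dp vp] := is_derive_pPV c0 Dx Dy xy0 yc0 pden0.
split; [exact: dq | split; [exact: dp | split; [exact: vq | exact: vp]]].
Qed.
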